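(* Let $S=\langle \underline{S},\sqcap,\sqcup,\Rightarrow,L,\neg,0,1\rangle$ be a finite rough algebra (as arises from a finite approximation space), let $M(x)=\neg L(\neg x)$, and let $T$ be the coapproximability relation on $S$: $(a,b)\in T$ iff there exists $c\in\underline{S}$ with $L(c)\le a\le M(c)$ and $L(c)\le b\le M(c)$. Then every block $B=\{a_i\}$ of $T$ is an interval of the lattice $\langle\underline{S},\sqcap,\sqcup\rangle$ of the form $[\bigwedge a_i,\bigvee a_i]=\{x\in\underline{S}:\bigwedge_i a_i\le x\le\bigvee_i a_i\}$.
   Context: A pre-rough algebra is an algebra $\langle\underline{S},\sqcap,\sqcup,\Rightarrow,L,\neg,0,1\rangle$ of type $(2,2,2,1,1,0,0)$ such that: $\langle\underline{S},\sqcap,\sqcup,\neg\rangle$ is a de Morgan lattice (with bounds $0,1$); $\neg\neg a=a$; $L(a)\sqcap a=L(a)$; $LL(a)=L(a)$; $L(1)=1$; $L(a\sqcap b)=L(a)\sqcap L(b)$; $\neg L\neg L(a)=L(a)$; $\neg L(a)\sqcup L(a)=1$; $L(a\sqcup b)=L(a)\sqcup L(b)$; if $L(a)\sqcap L(b)=L(a)$ and $\neg L(\neg(a\sqcap b))=\neg L(\neg a)$ then $a\sqcap b=a$; and $a\Rightarrow b=(\neg L(a)\sqcup L(b))\sqcap(L(\neg a)\sqcup\neg L(\neg b))$. A rough algebra is a completely distributive pre-rough algebra. For a reflexive symmetric relation $T$ on a set $H$, a block of $T$ is a maximal subset $B\subseteq H$ with $B\times B\subseteq T$. Meets and joins $\bigwedge,\bigvee$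 are taken in the lattice $\langle\underline{S},\sqcap,\sqcup\rangle$. *)

From mathcomp Require Import all_boot.
Set Implicit Arguments. Unset Strict Implicit. Unset Printing Implicit Defensive.

Record preRoughAlgebra (T : finType) := PreRoughAlgebra {
  meet : T -> T -> T;
  join : T -> T -> T;
  imp  : T -> T -> T;
  Lop  : T -> T;
  neg  : T -> T;
  zero : T;
  one  : T;
  meetC : forall a b, meet a b = meet b a;
  joinC : forall a b, join a b = join b a;
  meetA : forall a b c, meet a (meet b c) = meet (meet a b) c;
  joinA : forall a b c, join a (join b c) = join (join a b) c;
  meetKU : forall a b, meet a (join a b) = a;
  joinKI : forall a b, join a (meet a b) = a;
  meetUr : forall a b c, meet a (join b c) = join (meet a b) (meet a c);
  meet0 : forall a, meet zero a = zero;
  meet1 : forall a, meet one a = a;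
  negK : forall a, neg (neg a) = a;
  negI : forall a b, neg (meet a b) = join (neg a) (neg b);
  negU : forall a b, neg (join a b) = meet (neg a) (neg b);
  L_meet_id : forall a, meet (Lop a) a = Lop a;
  LL : forall a, Lop (Lop a) = Lop a;
  L1 : Lop one = one;
  LI : forall a b, Lop (meet a b) = meet (Lop a) (Lop b);
  L_negLneg : forall a, neg (Lop (neg (Lop a))) = Lop a;
  L_excl : forall a, join (neg (Lop a)) (Lop a) = one;
  LU : forall a b, Lop (join a b) = join (Lop a) (Lop b);
  L_rule : forall a b, meet (Lop a) (Lop b) = Lop a ->
           neg (Lop (neg (meet a b))) = neg (Lop (neg a)) -> meet a b = a;
  impE : forall a b, imp a b =
    meet (join (neg (Lop a)) (Lop b)) (join (Lop (neg a)) (neg (Lop (neg b))))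
}.

Section Defs.
Variables (T : finType) (S : preRoughAlgebra T).

Definition rle (a b : T) : bool := meet S a b == a.

Definition bigmeet (A : {set T}) : T := \big[meet S/one S]_(x in A) x.
Definition bigjoin (A : {set T}) : T := \big[join S/zero S]_(x in A) x.

(* complete distributivity (all families are finite as the carrier is finite):
   /\_i \/ A_i = \/_{f choice} /\_i f(i) *)
Definition completely_distributive : Prop :=
  forall (I : finType) (A : I -> {set T}),
    \big[meet S/one S]_(i : I) bigjoin (A i) =
    \big[join S/zero S]_(f : {ffun I -> T} | [forall i, f i \in A i])
        \big[meet S/one S]_(i : I) f i.

Definition rough_algebra : Prop := completely_distributive.

Definition Mop (x : T) : T := neg S (Lop S (neg S x)).

Definition coapprox (a b : T) : Prop :=
  exists c : T, [/\ rle (Lop S c) a, rle a (Mop c), rle (Lop S c) b & rle b (Mop c)].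

Definition is_block (R : T -> T -> Prop) (B : {set T}) : Prop :=
  (forall a b, a \in B -> b \in B -> R a b) /\
  (forall B' : {set T}, B \subset B' ->
     (forall a b, a \in B' -> b \in B' -> R a b) -> B' = B).

End Defs.

(* The meets and joins of a pre-rough algebra make its carrier a bounded
   distributive lattice in which L preserves finite meets and joins, and so
   does M = ¬L¬ by de Morgan.  If the elements of B are pairwise
   coapproximable, put c := ⋀_{a ∈ B} ⋁ {d | L d ≤ a}.  Then
   L c ≤ ⋁ {L d | L d ≤ a} ≤ a for every a ∈ B, and
   M c = ⋀_{a ∈ B} ⋁ {M d | L d ≤ a} ≥ b for every b ∈ B, because a witness d
   of the coapproximability of a and b has L d ≤ a and b ≤ M d.  So the whole
   interval [⋀B, ⋁B] is pairwise coapproximable through c, and maximality of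
   the block B forces B = [⋀B, ⋁B]. *)

From HB Require Import structures.
From Pilot Require Import Defs.
From mathcomp Require Import all_boot all_order.

Set Implicit Arguments. Unset Strict Implicit. Unset Printing Implicit Defensive.

Import Order.Theory.
Local Open Scope order_scope.

Definition rough_lattice (T : finType) (S : preRoughAlgebra T) : Type := T.

HB.instance Definition _ (T : finType) (S : preRoughAlgebra T) :=
  Finite.on (rough_lattice S).

Fact rough_meetxx (T : finType) (S : preRoughAlgebra T) : idempotent_op (meet S).
Proof. by move=> a; rewrite -{2}(Defs.joinKI S a a) Defs.meetKU. Qed.

Fact rough_meetUl (T : finType) (S : preRoughAlgebra T) :
  left_distributive (meet S) (join S).
Proof. by move=> a b c; rewrite Defs.meetC Defs.meetUr !(Defs.meetC S c). Qed.

HB.instance Definition _ (T : finType) (S : preRoughAlgebra T) :=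
  Order.isMeetJoinDistrLattice.Build (Order.Disp tt tt) (rough_lattice S)
  (fun x y => erefl : rle S x y = (meet S x y == x))
  (fun x y => erefl : (y != x) && rle S x y = _)
  (@Defs.meetC _ S) (@Defs.joinC _ S) (@Defs.meetA _ S) (@Defs.joinA _ S)
  (fun b a => Defs.meetKU S a b) (fun b a => Defs.joinKI S a b)
  (@rough_meetUl _ S) (@rough_meetxx _ S).

Fact rough_le0x (T : finType) (S : preRoughAlgebra T) (a : T) :
  rle S (Defs.zero S) a.
Proof. exact/eqP/meet0. Qed.

Fact rough_lex1 (T : finType) (S : preRoughAlgebra T) (a : T) :
  rle S a (Defs.one S).
Proof. by apply/eqP; rewrite Defs.meetC Defs.meet1. Qed.

HB.instance Definition _ (T : finType) (S : preRoughAlgebra T) :=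
  Order.hasBottom.Build (Order.Disp tt tt) (rough_lattice S) (@rough_le0x _ S).
HB.instance Definition _ (T : finType) (S : preRoughAlgebra T) :=
  Order.hasTop.Build (Order.Disp tt tt) (rough_lattice S) (@rough_lex1 _ S).

Section RoughOperators.
Variables (T : finType) (S : preRoughAlgebra T).
Local Notation lat := (rough_lattice S).
Local Notation L := (Lop S : lat -> lat).
Local Notation M := (Mop S : lat -> lat).
Local Notation neg := (neg S : lat -> lat).

Lemma neg0 : neg \bot = \top.
Proof.
change (Defs.neg S (Defs.zero S) = Defs.one S).
by rewrite -(meet0 S (Defs.neg S (Defs.one S))) negI negK; exact: (@joinx1 _ lat _).
Qed.

Lemma neg1 : neg \top = \bot.
Proof. by rewrite -neg0 negK. Qed.

Lemma LopI : {morph L : x y / x `&` y}.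
Proof. by move=> x y; exact: LI S x y. Qed.

Lemma LopU : {morph L : x y / x `|` y}.
Proof. by move=> x y; exact: LU S x y. Qed.

Lemma Lop1 : L \top = \top.
Proof. exact: L1 S. Qed.

Lemma Lop0 : L \bot = \bot.
Proof. by rewrite -(L_meet_id S (\bot : lat)); exact: (@meetx0 _ lat _). Qed.

Lemma MopI : {morph M : x y / x `&` y}.
Proof. by move=> x y; rewrite /Mop negI LU negU. Qed.

Lemma MopU : {morph M : x y / x `|` y}.
Proof. by move=> x y; rewrite /Mop negU LI negI. Qed.

Lemma Mop1 : M \top = \top.
Proof. by rewrite /Mop neg1 Lop0 neg0. Qed.

Lemma Mop0 : M \bot = \bot.
Proof. by rewrite /Mop neg0 Lop1 neg1. Qed.

Lemma pairwise_coapprox_witness (A : {set T}) :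
  {in A &, forall a b, coapprox S a b} ->
  exists c : lat, L c <= \meet_(a in A) (a : lat) /\ \join_(a in A) (a : lat) <= M c.
Proof.
move=> coA; exists (\meet_(a in A) \join_(d | L d <= a) d); split.
  rewrite (big_morph _ LopI Lop1); apply/meetsP => a aA.
  rewrite (le_trans (meets_inf _ aA)) // (big_morph _ LopU Lop0).
  exact/joinsP.
apply/joinsP => b bA; rewrite (big_morph _ MopI Mop1); apply/meetsP => a aA.
rewrite (big_morph _ MopU Mop0).
have [d [Ld_a _ _ b_Md]] := coA a b aA bA.
exact: (joins_min (j := d : lat)).
Qed.

Lemma sub_interval_bigmeet_bigjoin (A : {set T}) :
  A \subset [set x : T | \meet_(a in A) (a : lat) <= (x : lat) <= \join_(a in A) (a : lat)].
Proof. by apply/subsetP => x xA; rewrite inE meets_inf ?joins_sup. Qed.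

Lemma interval_coapprox (c lo hi : lat) : L c <= lo -> hi <= M c ->
  {in [set x : T | lo <= (x : lat) <= hi] &, forall a b, coapprox S a b}.
Proof.
move=> Lc_lo hi_Mc a b; rewrite !inE => /andP[lo_a a_hi] /andP[lo_b b_hi].
by exists c; split; [exact: le_trans Lc_lo lo_a | exact: le_trans a_hi hi_Mc
  | exact: le_trans Lc_lo lo_b | exact: le_trans b_hi hi_Mc].
Qed.

End RoughOperators.

Theorem proposition2p2 (T : finType) (S : preRoughAlgebra T)
  (hS : rough_algebra S) (B : {set T}) (hB : is_block (coapprox S) B) :
  B = [set x | rle S (bigmeet S B) x && rle S x (bigjoin S B)].
Proof.
have [c [Lc_meet join_Mc]] := pairwise_coapprox_witness hB.1.
apply/esym/hB.2; first exact: sub_interval_bigmeet_bigjoin.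
exact: interval_coapprox Lc_meet join_Mc.
Qed.
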